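(* There is an absolute constant $C>0$ such that for every $n\in\mathbb N$, all points $z_1,\dots,z_n\in\mathbb T$ and all $\alpha_1,\dots,\alpha_n>0$, the measure $\nu=\sum_{k=1}^n\alpha_k\delta_{z_k}$ satisfies $$\|\mathcal C\nu\|_{L^1(\mathbb D)}\ \ge\ C\,\frac{\sum_{k=1}^n\alpha_k^2}{\|\nu\|},$$ where $\|\nu\|=\sum_{k=1}^n\alpha_k$ is the total variation of $\nu$.
   Context: $\mathbb D$ is the open unit disc in $\mathbb C$, $\mathbb T=\partial\mathbb D$ the unit circle, and $L^1(\mathbb D)$ is taken with respect to planar Lebesgue measure $m$. For a measure $\mu$ on $\overline{\mathbb D}$, its Cauchy transform is $\mathcal C\mu(z)=\int\frac{d\mu(\xi)}{\xi-z}$ for $|z|<1$; thus $\mathcal C\nu(z)=\sum_{k=1}^n\frac{\alpha_k}{z_k-z}$. $\delta_{z}$ denotes the Dirac measure at $z$. *)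

From HB Require Import structures.
From mathcomp Require Import all_boot all_order all_algebra.
From mathcomp Require Import all_classical all_reals all_analysis.
From mathcomp Require Import complex.
Set Implicit Arguments. Unset Strict Implicit. Unset Printing Implicit Defensive.
Import Order.TTheory GRing.Theory Num.Theory.
Local Open Scope ring_scope.
Local Open Scope complex_scope.

Definition cplx (R : realType) (p : R * R) : R[i] := (p.1 +i* p.2)%C.

Definition unit_disc (R : realType) : set (R * R) :=
  [set p | p.1 ^+ 2 + p.2 ^+ 2 < 1].

(* Cauchy transform of nu = sum_k alpha_k delta_{z_k}, evaluated at w. *)
Definition cauchy_atomic (R : realType) (n : nat) (z : 'I_n -> R[i])
  (alpha : 'I_n -> R) (w : R[i]) : R[i] :=
  \sum_(k < n) (alpha k)%:C / (z k - w).

Definition L1_disc_norm_cauchy (R : realType) (n : nat) (z : 'I_n -> R[i])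
  (alpha : 'I_n -> R) : \bar R :=
  (\int[(product_measure1 (@lebesgue_measure R) (@lebesgue_measure R))]_(p in @unit_disc R)
     (ComplexField.Normc.normc (cauchy_atomic z alpha (cplx p)))%:E)%E.

(* For |z| = 1 and |w| < 1, 2 Re (w / (z - w)) + 1 = (1 - |w|^2) / |z - w|^2 is
   the Poisson kernel, so 2 Re (w Cnu(w)) + |nu| = sum_k alpha_k P(z_k, w) with
   nonnegative terms, and |Cnu(w)| >= Re (w Cnu(w)).  Near z_k, on a square Q_k
   of side proportional to alpha_k / |nu|, the k-th Poisson term alone exceeds
   2 |nu|; hence |Cnu| >= |nu| / 2 on each Q_k (counted with multiplicity), and
   integrating over the squares gives sum_k |nu| |Q_k| / 2 ~ sum_k alpha_k^2 / |nu|. *)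

From HB Require Import structures.
From mathcomp Require Import all_boot all_order all_algebra.
From mathcomp Require Import all_classical all_reals all_analysis.
From mathcomp Require Import complex measurable_realfun ring lra.
Import Order.TTheory GRing.Theory Num.Theory.
Local Open Scope ring_scope.
Local Open Scope classical_set_scope.

Local Notation normc := ComplexField.Normc.normc.

Section complex_facts.
Local Open Scope complex_scope.
Variable R : rcfType.

Lemma Re_sum n (F : 'I_n -> R[i]) :
  complex.Re (\sum_(k < n) F k) = \sum_(k < n) complex.Re (F k).
Proof. exact: (raddf_sum (@complex.Re R : Rcomplex R -> R)). Qed.

Lemma Re_le_normc (v : R[i]) : complex.Re v <= normc v.
Proof.
case: v => c d /=; apply: le_trans (ler_norm c) _.
by rewrite -sqrtr_sqr ler_wsqrtr // lerDl sqr_ge0.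
Qed.

Lemma Re_mul_le_normc (w v : R[i]) :
  normc w <= 1 -> complex.Re (w * v) <= normc v.
Proof.
move=> w1; apply: le_trans (Re_le_normc _) _.
rewrite ComplexField.Normc.normcM ler_piMl //.
by case: v => c d; rewrite sqrtr_ge0.
Qed.

Lemma Re_mul_cauchy_kernel (al a b x y : R) :
  a ^+ 2 + b ^+ 2 = 1 -> (a - x) ^+ 2 + (b - y) ^+ 2 != 0 ->
  2 * complex.Re ((x +i* y) * (al%:C / ((a +i* b) - (x +i* y)))) + al
  = al * ((1 - (x ^+ 2 + y ^+ 2)) / ((a - x) ^+ 2 + (b - y) ^+ 2)).
Proof.
move=> ab n0; rewrite -[in RHS]ab [X in complex.Re X]/GRing.mul /=.
by field.
Qed.
End complex_facts.

Lemma sqr_le_sqr_bounds (R : realDomainType) (x y : R) :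
  0 <= y -> (x ^+ 2 <= y ^+ 2) = (- y <= x <= y).
Proof.
move=> y0; rewrite -ler_norml -real_normK ?num_real //.
by rewrite ler_pXn2r ?nnegrE.
Qed.

Lemma square_near_unit_circle (R : realFieldType) (a b x y h : R) :
  a ^+ 2 + b ^+ 2 = 1 -> 0 < h -> h <= 1 / 12 ->
  (1 - 2 * h) * a - h <= x <= (1 - 2 * h) * a + h ->
  (1 - 2 * h) * b - h <= y <= (1 - 2 * h) * b + h ->
  x ^+ 2 + y ^+ 2 <= 1 - h /\ (a - x) ^+ 2 + (b - y) ^+ 2 <= 12 * h ^+ 2.
Proof.
move=> ab h0 h12 /andP[x1 x2] /andP[y1 y2].
set d1 := x - (1 - 2 * h) * a; set d2 := y - (1 - 2 * h) * b.
have hd1 : d1 ^+ 2 <= h ^+ 2.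
  by rewrite sqr_le_sqr_bounds ?(ltW h0) // /d1; apply/andP; split; lra.
have hd2 : d2 ^+ 2 <= h ^+ 2.
  by rewrite sqr_le_sqr_bounds ?(ltW h0) // /d2; apply/andP; split; lra.
set s := a * d1 + b * d2.
have lagrange : s ^+ 2 + (a * d2 - b * d1) ^+ 2 = d1 ^+ 2 + d2 ^+ 2.
  by rewrite -[RHS]mul1r -ab /s; ring.
have /andP[s1 s2] : - (3 * h) <= 2 * s <= 3 * h.
  rewrite -sqr_le_sqr_bounds; last by rewrite mulr_ge0 // ltW.
  have := sqr_ge0 (a * d2 - b * d1); nra.
have -> : x = (1 - 2 * h) * a + d1 by rewrite /d1; ring.
have -> : y = (1 - 2 * h) * b + d2 by rewrite /d2; ring.
split.
- have -> : ((1 - 2 * h) * a + d1) ^+ 2 + ((1 - 2 * h) * b + d2) ^+ 2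
     = (1 - 2 * h) ^+ 2 * (a ^+ 2 + b ^+ 2) + 2 * (1 - 2 * h) * s
       + (d1 ^+ 2 + d2 ^+ 2) by rewrite /s; ring.
  rewrite ab; nra.
- have -> : (a - ((1 - 2 * h) * a + d1)) ^+ 2 + (b - ((1 - 2 * h) * b + d2)) ^+ 2
     = 4 * h ^+ 2 * (a ^+ 2 + b ^+ 2) - 4 * h * s + (d1 ^+ 2 + d2 ^+ 2).
    by rewrite /s; ring.
  rewrite ab; nra.
Qed.

(* Unlike [ge0_le_integral], no measurability is needed: the integral of a
   nonnegative function is a supremum over the simple functions below it. *)
Lemma ge0_le_integralT d (T : measurableType d) (R : realType)
    (mu : {measure set T -> \bar R}) (f1 f2 : T -> \bar R) :
  (forall x, 0 <= f1 x)%E -> (forall x, f1 x <= f2 x)%E ->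
  (\int[mu]_x f1 x <= \int[mu]_x f2 x)%E.
Proof.
move=> f10 f12; have f20 x : (0 <= f2 x)%E by exact: le_trans (f10 x) (f12 x).
rewrite !ge0_integralTE //; apply: ereal_sup_le => _ [h hf1 <-].
by exists h => // x; exact: le_trans (hf1 x) (f12 x).
Qed.
Arguments ge0_le_integralT {d T R mu f1 f2}.

Lemma lebesgue_measure2_rectangle (R : realType) (a1 b1 a2 b2 : R) :
  a1 < b1 -> a2 < b2 ->
  product_measure1 (@lebesgue_measure R) (@lebesgue_measure R)
    (`[a1, b1] `*` `[a2, b2]) = ((b1 - a1) * (b2 - a2))%:E.
Proof.
move=> ab1 ab2.
have itv (a b : R) : a < b -> lebesgue_measure `[a, b] = (b - a)%:E.
  by move=> ab; rewrite lebesgue_measure_itv /= lte_fin ab -EFinD.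
rewrite product_measure1E ?measurable_itv // EFinM.
by congr (_ * _)%E; exact: itv.
Qed.

Lemma le_half_mul_nat (R : realFieldType) (M N : R) (m : nat) :
  0 <= M -> 0 <= N -> 2 * M * m%:R <= 2 * N + M -> M / 2 * m%:R <= N.
Proof.
case: m => [|m] M0 N0 hm; first by rewrite mulr0n mulr0.
have : 1 <= m.+1%:R :> R by rewrite ler1n.
nra.
Qed.

Section cauchy_atomic_lower_bound.
Variables (R : realType) (n : nat) (z : 'I_n -> R[i]) (alpha : 'I_n -> R).
Hypothesis z_unit : forall k, normc (z k) = 1.
Hypothesis alpha_gt0 : forall k, 0 < alpha k.
Implicit Types (k : 'I_n) (p : R * R).

Local Notation mass := (\sum_(k < n) alpha k).
Local Notation planar :=
  (product_measure1 (@lebesgue_measure R) (@lebesgue_measure R)).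

Let a k := complex.Re (z k).
Let b k := complex.Im (z k).

Lemma z_coordsE k : z k = (a k +i* b k)%C.
Proof. by rewrite /a /b; case: (z k). Qed.

Lemma z_coords_sqr k : a k ^+ 2 + b k ^+ 2 = 1.
Proof.
have := z_unit k; rewrite z_coordsE /= => /(congr1 (fun r => r ^+ 2)).
by rewrite expr1n sqr_sqrtr // addr_ge0 ?sqr_ge0.
Qed.

Lemma alpha_le_mass k : alpha k <= mass.
Proof.
rewrite (bigD1 k) //= lerDl.
by apply: sumr_ge0 => i _; exact: ltW.
Qed.

Lemma mass_gt0 k : 0 < mass.
Proof. exact: lt_le_trans (alpha_gt0 k) (alpha_le_mass k). Qed.

Definition radius k := alpha k / (48 * mass).

Lemma radius_gt0 k : 0 < radius k.
Proof. by rewrite divr_gt0 // mulr_gt0 // (mass_gt0 k). Qed.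

Lemma radius_le k : radius k <= 1 / 12.
Proof.
rewrite ler_pdivrMr ?mulr_gt0 ?(mass_gt0 k) //.
have := alpha_le_mass k; have := mass_gt0 k; lra.
Qed.

Lemma mass_mul_radius k : mass * radius k = alpha k / 48.
Proof. by rewrite /radius; field; exact: lt0r_neq0 (mass_gt0 k). Qed.

(* Centred at (1 - 2 radius k) z_k, so inside the disc at distance about
   radius k from z_k; the constant 48 makes the k-th Poisson term exceed
   2 * mass there. *)
Definition square k : set (R * R) :=
  `[(1 - 2 * radius k) * a k - radius k, (1 - 2 * radius k) * a k + radius k]
  `*` `[(1 - 2 * radius k) * b k - radius k, (1 - 2 * radius k) * b k + radius k].

Lemma measurable_square k : measurable (square k).
Proof. by apply: measurableX; exact: measurable_itv. Qed.

Lemma square_bounds k p : square k p ->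
  p.1 ^+ 2 + p.2 ^+ 2 <= 1 - radius k /\
  (a k - p.1) ^+ 2 + (b k - p.2) ^+ 2 <= 12 * radius k ^+ 2.
Proof.
rewrite /square /= !in_itv /= => -[].
exact: square_near_unit_circle (z_coords_sqr k) (radius_gt0 k) (radius_le k).
Qed.

Lemma square_sub_disc k : square k `<=` unit_disc (R := R).
Proof.
move=> p /square_bounds[p1 _]; rewrite /unit_disc /=.
by apply: le_lt_trans p1 _; rewrite ltrBlDr ltrDl radius_gt0.
Qed.

Section at_a_point.
Variable p : R * R.
Hypothesis p_disc : p.1 ^+ 2 + p.2 ^+ 2 < 1.

Let dist2 k := (a k - p.1) ^+ 2 + (b k - p.2) ^+ 2.
Let poisson k := alpha k * ((1 - (p.1 ^+ 2 + p.2 ^+ 2)) / dist2 k).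

Lemma dist2_gt0 k : 0 < dist2 k.
Proof.
rewrite lt0r addr_ge0 ?sqr_ge0 // andbT paddr_eq0 ?sqr_ge0 // !sqrf_eq0 !subr_eq0.
apply: contraTN p_disc => /andP[/eqP <- /eqP <-].
by rewrite z_coords_sqr ltxx.
Qed.

Lemma poisson_sum :
  2 * complex.Re (cplx p * cauchy_atomic z alpha (cplx p)) + mass
  = \sum_(k < n) poisson k.
Proof.
rewrite /cauchy_atomic mulr_sumr Re_sum mulr_sumr -big_split /=.
apply: eq_bigr => k _; rewrite z_coordsE.
exact: Re_mul_cauchy_kernel (z_coords_sqr k) (lt0r_neq0 (dist2_gt0 k)).
Qed.

Lemma poisson_ge_indicator k : 2 * mass * \1_(square k) p <= poisson k.
Proof.
have poisson_ge0 : 0 <= poisson k.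
  by rewrite mulr_ge0 ?divr_ge0 ?ltW ?dist2_gt0 // subr_gt0.
rewrite indicE; have [/set_mem Qp|] := boolP (p \in square k); last first.
  by rewrite mulr0.
have [p1 p2] := square_bounds _ _ Qp.
rewrite /poisson mulr1 mulrA ler_pdivlMr ?dist2_gt0 //.
apply: le_trans (_ : 2 * mass * (12 * radius k ^+ 2) <= _).
  by rewrite ler_pM2l ?mulr_gt0 ?(mass_gt0 k).
have -> : 2 * mass * (12 * radius k ^+ 2) = alpha k * radius k / 2.
  rewrite (_ : 2 * mass * _ = 24 * radius k * (mass * radius k)); last by ring.
  by rewrite mass_mul_radius; field.
have := alpha_gt0 k; have := radius_gt0 k; nra.
Qed.

Lemma indicator_sum_le_cauchy :
  mass / 2 * \sum_(k < n) \1_(square k) p <= normc (cauchy_atomic z alpha (cplx p)).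
Proof.
set F := cauchy_atomic z alpha (cplx p).
have sum_le : 2 * mass * \sum_(k < n) \1_(square k) p <= 2 * normc F + mass.
  rewrite mulr_sumr; apply: le_trans (_ : \sum_(k < n) poisson k <= _).
    by apply: ler_sum => k _; exact: poisson_ge_indicator.
  rewrite -poisson_sum lerD2r ler_pM2l // Re_mul_le_normc //=.
  by rewrite -sqrtr1 ler_wsqrtr // ltW.
have count : \sum_(k < n) \1_(square k) p
    = (\sum_(k < n) (p \in square k) : nat)%:R :> R.
  by rewrite natr_sum; apply: eq_bigr => k _; rewrite indicE.
rewrite count in sum_le *; apply: le_half_mul_nat sum_le.
  by apply: sumr_ge0 => k _; exact: ltW.
by rewrite /F; case: (cauchy_atomic _ _ _) => c d; rewrite sqrtr_ge0.
Qed.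

End at_a_point.

Lemma integral_indicator_square k :
  (\int[planar]_q ((mass / 2) * \1_(square k) q)%:E
    = (mass / 2 * (2 * radius k) ^+ 2)%:E)%E.
Proof.
have mass_half_ge0 : 0 <= mass / 2 by rewrite divr_ge0 // ltW // (mass_gt0 k).
have mindic : measurable_fun setT (EFin \o \1_(square k) : R * R -> \bar R).
  by apply/measurable_EFinP; exact: measurable_indic (measurable_square k).
under eq_integral do rewrite EFinM.
rewrite ge0_integralZl_EFin //.
rewrite integral_indic //; last exact: measurable_square k.
rewrite setIT [X in (_ * X)%E]lebesgue_measure2_rectangle; last 2 first.
- by have := radius_gt0 k; lra.
- by have := radius_gt0 k; lra.
by rewrite -EFinM; congr EFin; ring.
Qed.

Lemma indicator_sum_le_restricted_cauchy p :
  (\sum_(k < n) ((mass / 2) * \1_(square k) p)%:E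
    <= ((fun q => (normc (cauchy_atomic z alpha (cplx q)))%:E) \_ (@unit_disc R)) p)%E.
Proof.
rewrite patchE sumEFin -mulr_sumr.
have [/set_mem p_disc|p_ndisc] := boolP (p \in unit_disc (R := R)).
  by rewrite lee_fin; exact: indicator_sum_le_cauchy.
rewrite lee_fin [X in _ * X]big1 ?mulr0 // => k _.
have p_nsquare : p \notin square k.
  by apply: contraNN p_ndisc => /set_mem/square_sub_disc/mem_set.
by rewrite indicE (negbTE p_nsquare).
Qed.

Lemma L1_disc_norm_cauchy_ge :
  ((1 / 1152 * ((\sum_(k < n) alpha k ^+ 2) / mass))%:E
    <= L1_disc_norm_cauchy z alpha)%E.
Proof.
rewrite /L1_disc_norm_cauchy integral_mkcond.
have term_ge0 k p : (0 <= ((mass / 2) * \1_(square k) p)%:E)%E.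
  by rewrite lee_fin mulr_ge0 ?indicE // divr_ge0 // ltW // (mass_gt0 k).
have sum_ge0 p : (0 <= \sum_(k < n) ((mass / 2) * \1_(square k) p)%:E)%E.
  by apply: sume_ge0 => k _; exact: term_ge0.
apply: le_trans
  (ge0_le_integralT (mu := planar) sum_ge0 indicator_sum_le_restricted_cauchy).
have mterm k : measurable_fun setT
    (EFin \o (fun p => mass / 2 * \1_(square k) p) : R * R -> \bar R).
  apply/measurable_EFinP; apply: measurable_funM; first exact: measurable_cst.
  exact: measurable_indic (measurable_square k).
rewrite ge0_integral_sum //.
have term_eq k : mass / 2 * (2 * radius k) ^+ 2 = 1 / 1152 * (alpha k ^+ 2 / mass).
  by rewrite /radius; field; exact: lt0r_neq0 (mass_gt0 k).
rewrite (eq_bigr _ (fun k _ => integral_indicator_square k)) sumEFin lee_fin.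
by rewrite (eq_bigr _ (fun k _ => term_eq k)) -mulr_sumr -mulr_suml.
Qed.

End cauchy_atomic_lower_bound.

Theorem theorem1p2 (R : realType) :
  exists C : R, 0 < C /\
  forall (n : nat) (z : 'I_n -> R[i]) (alpha : 'I_n -> R),
    (forall k, ComplexField.Normc.normc (z k) = 1) ->
    (forall k, 0 < alpha k) ->
    ((C * ((\sum_(k < n) alpha k ^+ 2) / (\sum_(k < n) alpha k)))%:E
       <= L1_disc_norm_cauchy z alpha)%E.
Proof.
exists (1 / 1152); split; first by rewrite divr_gt0 ?ltr01 ?ltr0n.
by move=> n z alpha z_unit alpha_gt0; exact: L1_disc_norm_cauchy_ge.
Qed.
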